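(* Let $\ell\in\mathbb{N}$ and $\alpha_j,\beta_j\in\mathbb{N}$ (positive integers) for $j=1,\dots,\ell$. Then, as formal power series in $t$ and $q$, $$\mathbf{R}^{\alpha_1}\Big[\mathbf{y}^{\beta_1}\mathbf{R}^{\alpha_2}\big[\mathbf{y}^{\beta_2}\cdots\mathbf{R}^{\alpha_\ell}[\mathbf{y}^{\beta_\ell}]\cdots\big]\Big](t)=\sum_{\substack{j_1\ge\beta_1,\dots,j_\ell\ge\beta_\ell\\ k_1\ge\alpha_1,\dots,k_\ell\ge\alpha_\ell}}\prod_{r=1}^\ell\left[\binom{j_r-1}{\beta_r-1}\binom{k_r-1}{\alpha_r-1}q^{k_r\sum_{s=r}^\ell j_s}t^{j_r}\right].$$
   Context: $\mathbf{y}(t)=\frac{t}{1-t}$, and $\mathbf{y}^{\beta}$ denotes multiplication by the series $\mathbf{y}(t)^\beta$. $\mathbf{R}$ is the operator on formal power series $f(t)$ (with coefficients in $\mathbb{Q}[[q]]$ and no constant term in $t$) given by $\mathbf{R}[f](t)=\sum_{k\ge1}f(q^kt)$, and $\mathbf{R}^{n}$ is its $n$-fold composition. *)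

From HB Require Import structures.
From mathcomp Require Import all_boot all_order all_algebra.
Set Implicit Arguments. Unset Strict Implicit. Unset Printing Implicit Defensive.
Import Order.TTheory GRing.Theory Num.Theory.
Local Open Scope ring_scope.

(* A formal power series in Q[[t,q]]:  f a b = coefficient of t^a q^b. *)
Definition fps := nat -> nat -> rat.

Definition fps_one : fps := fun a b => if (a == 0)%N && (b == 0)%N then 1 else 0.

Definition fps_mul (f g : fps) : fps :=
  fun a b => \sum_(i < a.+1) \sum_(c < b.+1) f i c * g (a - i)%N (b - c)%N.

(* y(t) = t/(1-t) = sum_{j>=1} t^j *)
Definition fps_y : fps := fun a b => if (0 < a)%N && (b == 0)%N then 1 else 0.

Definition fps_ypow (n : nat) : fps := iter n (fps_mul fps_y) fps_one.

(* R[f](t) = sum_{k>=1} f(q^k t).  The coefficient of t^a q^b in f(q^k t) is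
   f a (b - k a) when k a <= b.  R is only defined on series without constant
   term in t; we set the t^0 component of R[f] to 0 (which is correct on that
   domain). *)
Definition opR (f : fps) : fps :=
  fun a b => if a == 0%N then 0
             else \sum_(1 <= k < b.+1 | (k * a <= b)%N) f a (b - k * a)%N.

Definition opRn (n : nat) (f : fps) : fps := iter n opR f.

Definition nested (l : nat) (al be : 'I_l -> nat) : fps :=
  foldr (fun i acc => opRn (al i) (fps_mul (fps_ypow (be i)) acc))
        fps_one (enum 'I_l).

(* Coefficient of t^a q^b of the right-hand side: the sum over all
   j_r >= be_r, k_r >= al_r of the product; only tuples with
   sum_r j_r = a and sum_r k_r (sum_{s>=r} j_s) = b contribute to this
   coefficient, and such tuples satisfy j_r <= a, k_r <= b (as all j_s >= 1),
   so the sum is a finite sum over bounded tuples. *)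
Definition rhs (l : nat) (al be : 'I_l -> nat) : fps :=
  fun a b =>
    \sum_(j : {ffun 'I_l -> 'I_a.+1})
     \sum_(k : {ffun 'I_l -> 'I_b.+1} |
             [forall r, (be r <= j r)%N && (al r <= k r)%N]
             && ((\sum_(r < l) (j r : nat))%N == a)
             && ((\sum_(r < l) (k r : nat) * (\sum_(s < l | (r <= s)%N) (j s : nat)))%N == b))
       \prod_(r < l) (('C(j r - 1, be r - 1) * 'C(k r - 1, al r - 1))%N)%:R.

From mathcomp Require Import all_boot all_order all_algebra.
From mathcomp Require Import zify.
Set Implicit Arguments. Unset Strict Implicit. Unset Printing Implicit Defensive.
Import Order.TTheory GRing.Theory Num.Theory.
Local Open Scope ring_scope.

(* Multiplication by y^be and the operator R^al both act through the
   coefficients C(j-1, n-1) of y(t)^n: y^be f = sum_j C(j-1, be-1) t^j f, and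
   R^al[f](t) = sum_k C(k-1, al-1) f(q^k t), since R^al iterates
   f |-> sum_(k >= 1) f(q^k t), whose weights in k are the coefficients of y.
   Peeling off R^(al_1)[y^(be_1) _] expresses the left-hand side with l factors
   through the one with l - 1 factors.  The right-hand side satisfies the same
   recursion: isolating r = 1 in the product, the factor q^(k_1 (j_1+...+j_l))
   is the dilation t |-> q^(k_1) t applied to a series of t-degree
   j_1 + ... + j_l. *)

Lemma big_ord_widen0 (R : nmodType) n m (F : nat -> R) : (n <= m)%N ->
  (forall i, (n <= i < m)%N -> F i = 0) -> \sum_(i < m) F i = \sum_(i < n) F i.
Proof.
move=> le_nm F0; rewrite [RHS](big_ord_widen _ _ le_nm) [RHS]big_mkcond /=.
by apply: eq_bigr => i _; case: ltnP => // le_ni; rewrite F0 // le_ni ltn_ord.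
Qed.

Lemma big_ord_geq_shift (R : nmodType) (h : nat -> R) i N :
  (forall m, (N < m)%N -> h m = 0) ->
  \sum_(m < N.+1 | (i <= m)%N) h m = \sum_(j < N.+1) h (i + j)%N.
Proof.
move=> h0; transitivity (\sum_(i <= m < N.+1) h m).
  by rewrite big_geq_mkord; apply: eq_bigl => m.
rewrite -{1}[i]add0n big_addn big_mkord.
rewrite [RHS](big_ord_widen0 (F := fun j => h (i + j)%N) (leq_subr i N.+1)).
  by apply: eq_bigr => j _; rewrite addnC.
by move=> j /andP[le_j _]; rewrite h0 //; lia.
Qed.

Lemma forall_ordS l (P : pred 'I_l.+1) :
  [forall r, P r] = P ord0 && [forall r : 'I_l, P (lift ord0 r)].
Proof.
apply/forallP/andP => [P_all|[P0 /forallP P_lift] r]; first by split=> //; apply/forallP.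
by case: (unliftP ord0 r) => [j ->|->].
Qed.

Section FfunCons.
Variables (T : finType) (l : nat).

Definition ffun_cons (x : T) (g : {ffun 'I_l -> T}) : {ffun 'I_l.+1 -> T} :=
  [ffun i => if unlift ord0 i is Some i' then g i' else x].

Lemma ffun_cons0 x g : ffun_cons x g ord0 = x.
Proof. by rewrite ffunE unlift_none. Qed.

Lemma ffun_consS x g i : ffun_cons x g (lift ord0 i) = g i.
Proof. by rewrite ffunE liftK. Qed.

Lemma big_ffun_cons (R : nmodType) (F : {ffun 'I_l.+1 -> T} -> R) :
  \sum_f F f = \sum_(x : T) \sum_(g : {ffun 'I_l -> T}) F (ffun_cons x g).
Proof.
rewrite pair_big /= (reindex (fun p : T * {ffun 'I_l -> T} => ffun_cons p.1 p.2)) //.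
pose uncons (f : {ffun 'I_l.+1 -> T}) := (f ord0, [ffun i => f (lift ord0 i)]).
exists uncons => [[x g] _|f _]; rewrite /uncons /=.
  by rewrite ffun_cons0; congr pair; apply/ffunP => i; rewrite ffunE ffun_consS.
apply/ffunP => i; case: (unliftP ord0 i) => [j ->|->].
  by rewrite ffun_consS ffunE.
by rewrite ffun_cons0.
Qed.

Lemma sum_ffun_cons (x : T) (g : {ffun 'I_l -> T}) (w : T -> nat) :
  (\sum_(r < l.+1) w (ffun_cons x g r) = w x + \sum_(r < l) w (g r))%N.
Proof. by rewrite big_ord_recl ffun_cons0; under eq_bigr do rewrite ffun_consS. Qed.

End FfunCons.

Lemma sum_binom_hockey (n K : nat) : (0 < n)%N ->
  (\sum_(m < K | (n <= m)%N) 'C(m.-1, n.-1))%N = 'C(K.-1, n).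
Proof.
case: n => // n _; elim: K => [|K IH]; first by rewrite big_ord0.
rewrite big_mkcond big_ord_recr /= -big_mkcond IH; case: K IH => [|K] _ /=.
  by rewrite bin0n.
by rewrite binS; case: leqP => // lt_Kn; rewrite (@bin_small K n) ?addn0.
Qed.

Section Convolution.
Variable R : comPzSemiRingType.

Definition conv (u v : nat -> R) (n : nat) : R := \sum_(i < n.+1) u i * v (n - i)%N.

Lemma convC (u v : nat -> R) : conv u v =1 conv v u.
Proof.
move=> n; rewrite /conv (reindex_inj rev_ord_inj) /=; apply: eq_bigr => i _.
by rewrite subSS subKn 1?mulrC // -ltnS.
Qed.

Lemma sum_conv (u v w : nat -> R) N : (forall m, (N < m)%N -> w m = 0) ->
  \sum_(i < N.+1) \sum_(j < N.+1) u i * v j * w (i + j)%N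
  = \sum_(m < N.+1) conv u v m * w m.
Proof.
move=> w0; transitivity
    (\sum_(m < N.+1) \sum_(i < N.+1 | (i <= m)%N) u i * v (m - i)%N * w m).
  rewrite [RHS](exchange_big_dep xpredT) //=; apply: eq_bigr => i _.
  rewrite (big_ord_geq_shift (h := fun m => u i * v (m - i)%N * w m)) => [|m lt_Nm].
    by apply: eq_bigr => j _; rewrite addKn.
  by rewrite w0 ?mulr0.
apply: eq_bigr => m _; rewrite /conv mulr_suml.
by rewrite (big_ord_widen _ (fun i => u i * v (m - i)%N * w m) (ltn_ord m)).
Qed.

Definition ypow_coef (n : nat) : nat -> R :=
  iter n (conv (fun i => (0 < i)%:R)) (fun i => (i == 0)%:R).

Lemma ypow_coefE n m : (0 < n)%N ->
  ypow_coef n m = if (n <= m)%N then 'C(m.-1, n.-1)%:R else 0.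
Proof.
elim: n m => [//|[_ m _|n IH m _]].
  rewrite /ypow_coef /= convC /conv big_ord_recl big1 => [|i _]; last by rewrite mul0r.
  by rewrite addr0 mul1r subn0 bin0; case: m.
rewrite -[LHS]/(conv _ (ypow_coef n.+1) m) convC /conv.
under eq_bigr => i _ do rewrite IH //.
rewrite big_ord_recr /= subnn mulr0 addr0.
under eq_bigr => i _ do rewrite subn_gt0 (ltn_ord i) mulr1.
rewrite -big_mkcond /= -natr_sum sum_binom_hockey //.
by case: leqP => // lt_mn; rewrite bin_small //; lia.
Qed.
End Convolution.

Arguments ypow_coef {R} n.

Lemma fps_mul_tseries (g F : fps) a b : (forall i c, (0 < c)%N -> g i c = 0) ->
  fps_mul g F a b = \sum_(i < a.+1) g i 0%N * F (a - i)%N b.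
Proof.
move=> g0; apply: eq_bigr => i _; rewrite big_ord_recl big1 ?addr0 ?subn0 // => c _.
by rewrite g0 ?mul0r.
Qed.

Lemma fps_ypowE n a b : fps_ypow n a b = if b == 0%N then ypow_coef n a else 0.
Proof.
elim: n a b => [|n IH] a b.
  by rewrite /= /fps_one; case: (a == 0%N); case: (b == 0%N).
rewrite -[LHS]/(fps_mul fps_y (fps_ypow n) a b) fps_mul_tseries => [|i c c_gt0]; last first.
  by rewrite /fps_y eqn0Ngt c_gt0 andbF.
under eq_bigr => i _ do rewrite IH /fps_y andbT.
case: eqP => [_|_]; last by rewrite big1 // => i _; rewrite mulr0.
by apply: eq_bigr => i _; case: (0 < i)%N; rewrite ?mul1r ?mul0r.
Qed.

Lemma fps_mul_ypow n (F : fps) a b N : (a <= N)%N ->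
  fps_mul (fps_ypow n) F a b
  = \sum_(i < N.+1 | (i <= a)%N) ypow_coef n i * F (a - i)%N b.
Proof.
move=> le_aN; rewrite fps_mul_tseries => [|i c c_gt0]; last first.
  by rewrite fps_ypowE eqn0Ngt c_gt0.
rewrite (big_ord_widen N.+1 (fun i => fps_ypow n i 0%N * F (a - i)%N b)) //.
by apply: eq_bigr => i _; rewrite fps_ypowE.
Qed.

(* [fps_dilate k f] is the series f(q^k t). *)
Definition fps_dilate (k : nat) (f : fps) : fps :=
  fun a b => if (k * a <= b)%N then f a (b - k * a)%N else 0.

Lemma fps_dilateD k K f a b :
  fps_dilate (k + K) f a b = fps_dilate k (fps_dilate K f) a b.
Proof.
rewrite /fps_dilate mulnDl; case: (leqP (k * a) b) => [le_kb|lt_bk].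
  by rewrite leq_subRL // subnDA.
by rewrite leqNgt (leq_trans lt_bk) ?leq_addr.
Qed.

Lemma fps_dilate_eq0 k f a b : (b < k * a)%N -> fps_dilate k f a b = 0.
Proof. by move=> lt_b; rewrite /fps_dilate leqNgt lt_b. Qed.

Lemma opR_dilate (f : fps) a b : (0 < a)%N ->
  opR f a b = \sum_(k < b.+1) (0 < k)%:R * fps_dilate k f a b.
Proof.
move=> a_gt0; rewrite /opR eqn0Ngt a_gt0 /=.
rewrite -(big_mkord xpredT (fun k => (0 < k)%:R * fps_dilate k f a b)) big_ltn //.
rewrite mul0r add0r big_mkcond /=.
by apply: eq_big_nat => k /andP[k_gt0 _]; rewrite k_gt0 mul1r.
Qed.

Lemma opRnE n (f : fps) a b M : (0 < a)%N -> (b <= M)%N ->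
  opRn n f a b = \sum_(K < M.+1) ypow_coef n K * fps_dilate K f a b.
Proof.
move=> a_gt0; elim: n b => [|n IH] b le_bM.
  rewrite big_ord_recl big1 => [|K _]; last by rewrite mul0r.
  by rewrite /fps_dilate mul1r addr0 mul0n subn0.
have dilate_opRn k : fps_dilate k (opRn n f) a b
    = \sum_(K < M.+1) ypow_coef n K * fps_dilate (k + K) f a b.
  rewrite {1}/fps_dilate; case: leqP => [le_kb|lt_bk].
    rewrite (IH _ (leq_trans (leq_subr _ _) le_bM)); apply: eq_bigr => K _.
    by rewrite fps_dilateD /fps_dilate le_kb.
  by rewrite big1 // => K _; rewrite fps_dilate_eq0 ?mulr0 // mulnDl ltn_addr.
rewrite -[LHS]/(opR (opRn n f) a b) opR_dilate //.
rewrite -(big_ord_widen0 (m := M.+1)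
    (F := fun k => (0 < k)%:R * fps_dilate k (opRn n f) a b)) // => [|k /andP[lt_bk _]];
  last by rewrite fps_dilate_eq0 ?mulr0 //; nia.
under eq_bigr => k _ do rewrite dilate_opRn mulr_sumr.
under eq_bigr => k _ do under eq_bigr => K _ do rewrite mulrA.
(* The double sum is the convolution defining [ypow_coef n.+1]. *)
rewrite (sum_conv (fun k => (0 < k)%:R) (ypow_coef n) (w := fun m => fps_dilate m f a b)) //.
by move=> m lt_Mm; rewrite fps_dilate_eq0 //; nia.
Qed.

(* Both sides of the theorem, as functions of l, satisfy
   F (l + 1) = step_sum (al 0) (be 0) (F l) N M: the factor r = 1 is split off. *)
Definition step_sum (al0 be0 : nat) (g : nat -> nat -> rat) (N M a b : nat) : rat :=
  \sum_(j0 < N.+1) \sum_(k0 < M.+1)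
    (if [&& be0 <= j0, al0 <= k0, j0 <= a & k0 * a <= b]%N
     then ('C(j0 - 1, be0 - 1) * 'C(k0 - 1, al0 - 1))%N%:R * g (a - j0)%N (b - k0 * a)%N
     else 0).

Lemma eq_step_sum al0 be0 (g h : nat -> nat -> rat) N M a b :
  (forall a' b', (a' <= a)%N -> (b' <= b)%N -> g a' b' = h a' b') ->
  step_sum al0 be0 g N M a b = step_sum al0 be0 h N M a b.
Proof.
move=> eq_gh; apply: eq_bigr => j0 _; apply: eq_bigr => k0 _.
by rewrite eq_gh ?leq_subr.
Qed.

Lemma nested_cons l (al be : 'I_l.+1 -> nat) :
  nested al be = opRn (al ord0) (fps_mul (fps_ypow (be ord0))
     (nested (fun i => al (lift ord0 i)) (fun i => be (lift ord0 i)))).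
Proof. by rewrite /nested enum_ordSl /= foldr_map. Qed.

Lemma nested_step l (al be : 'I_l.+1 -> nat) N M a b :
  (0 < al ord0)%N -> (0 < be ord0)%N -> (a <= N)%N -> (b <= M)%N ->
  nested al be a b = step_sum (al ord0) (be ord0)
    (nested (fun i => al (lift ord0 i)) (fun i => be (lift ord0 i))) N M a b.
Proof.
move=> al0_gt0 be0_gt0 le_aN le_bM; rewrite nested_cons.
case: (posnP a) => [->|a_gt0].
  rewrite /step_sum big1 => [|j0 _]; first by case: (al ord0) al0_gt0.
  by rewrite big1 // => k0 _; case: ifP => // /and4P[? _ ? _]; lia.
rewrite (opRnE _ _ a_gt0 le_bM) /step_sum exchange_big; apply: eq_bigr => k0 _ /=.
rewrite /fps_dilate (fps_mul_ypow _ _ _ le_aN) ypow_coefE //.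
case: (boolP ((al ord0 <= k0) && (k0 * a <= b))%N) => [/andP[-> ->]|bad_k0]; last first.
  rewrite [RHS]big1 => [|j0 _].
    by move: bad_k0; case: (al ord0 <= k0)%N; case: (k0 * a <= b)%N; rewrite ?mul0r ?mulr0.
  by case: ifP => // /and4P[_ le_k0 _ le_k0a]; move: bad_k0; rewrite le_k0 le_k0a.
rewrite big_mkcond mulr_sumr; apply: eq_bigr => j0 _ /=; rewrite ypow_coefE // !subn1.
by rewrite andbT natrM; case: (j0 <= a)%N; case: (be ord0 <= j0)%N;
  rewrite ?mul0r ?mulr0 // mulrCA mulrA.
Qed.

(* [rhs] with the ranges of j and k decoupled from (a, b), so that the
   recursion in l keeps them fixed; any N >= a, M >= b give [rhs]. *)
Definition rhs_cond l (al be : 'I_l -> nat) N M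
    (j : {ffun 'I_l -> 'I_N.+1}) (k : {ffun 'I_l -> 'I_M.+1}) (a b : nat) : bool :=
  [forall r, (be r <= j r)%N && (al r <= k r)%N]
  && ((\sum_(r < l) (j r : nat))%N == a)
  && ((\sum_(r < l) (k r : nat) * (\sum_(s < l | (r <= s)%N) (j s : nat)))%N == b).

Definition rhs_term l (al be : 'I_l -> nat) N M
    (j : {ffun 'I_l -> 'I_N.+1}) (k : {ffun 'I_l -> 'I_M.+1}) : rat :=
  \prod_(r < l) (('C(j r - 1, be r - 1) * 'C(k r - 1, al r - 1))%N)%:R.

Definition rhs_bounded l (al be : 'I_l -> nat) (N M a b : nat) : rat :=
  \sum_(j : {ffun 'I_l -> 'I_N.+1})
    \sum_(k : {ffun 'I_l -> 'I_M.+1} | rhs_cond al be j k a b) rhs_term al be j k.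

Lemma rhs_boundedE l (al be : 'I_l -> nat) a b : rhs al be a b = rhs_bounded al be a b a b.
Proof. by []. Qed.

Lemma rhs_bounded0 (al be : 'I_0 -> nat) N M a b : rhs_bounded al be N M a b = fps_one a b.
Proof.
have cond0 j k : rhs_cond al be j k a b = (a == 0%N) && (b == 0%N).
  rewrite /rhs_cond !big_ord0 (eq_sym 0%N a) (eq_sym 0%N b).
  by rewrite (_ : [forall r, _] = true) //; apply/forallP => -[].
have term1 j k : rhs_term al be j k = 1 :> rat by rewrite /rhs_term big_ord0.
rewrite /rhs_bounded /fps_one.
under eq_bigr => j _ do
  rewrite (eq_bigl _ _ (cond0 N M j)) (eq_bigr _ (fun k _ => term1 N M j k)).
case: ((a == 0%N) && (b == 0%N)).
  by rewrite !sumr_const !card_ffun !card_ord.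
by rewrite big1 // => j _; rewrite big_pred0.
Qed.

Section RhsCons.
Variables (l : nat) (al be : 'I_l.+1 -> nat) (N M : nat).
Let al' (i : 'I_l) := al (lift ord0 i).
Let be' (i : 'I_l) := be (lift ord0 i).

Lemma weighted_sum_cons (j0 : 'I_N.+1) jt (k0 : 'I_M.+1) kt :
  (\sum_(r < l.+1) (ffun_cons k0 kt r : nat)
      * (\sum_(s < l.+1 | (r <= s)%N) (ffun_cons j0 jt s : nat))
   = k0 * (j0 + \sum_(r < l) (jt r : nat))
     + \sum_(r < l) (kt r : nat) * (\sum_(s < l | (r <= s)%N) (jt s : nat)))%N.
Proof.
rewrite big_ord_recl ffun_cons0 -(sum_ffun_cons _ _ (@nat_of_ord _)); congr (_ * _ + _)%N.
apply: eq_bigr => r _; rewrite ffun_consS big_mkcond big_ord_recl /=.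
rewrite add0n; congr (_ * _)%N; rewrite [RHS]big_mkcond.
by under eq_bigr do rewrite ffun_consS.
Qed.

Lemma rhs_cond_cons (j0 : 'I_N.+1) jt (k0 : 'I_M.+1) kt a b :
  rhs_cond al be (ffun_cons j0 jt) (ffun_cons k0 kt) a b =
  [&& be ord0 <= j0, al ord0 <= k0, j0 <= a, k0 * a <= b &
      rhs_cond al' be' jt kt (a - j0) (b - k0 * a)]%N.
Proof.
rewrite /rhs_cond (sum_ffun_cons _ _ (@nat_of_ord _)) weighted_sum_cons forall_ordS !ffun_cons0.
have -> : [forall r, (be (lift ord0 r) <= ffun_cons j0 jt (lift ord0 r))%N
    && (al (lift ord0 r) <= ffun_cons k0 kt (lift ord0 r))%N]
    = [forall r, (be' r <= jt r)%N && (al' r <= kt r)%N].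
  by apply: eq_forallb => r; rewrite !ffun_consS.
case: [forall r, _]; case: (be ord0 <= j0)%N; case: (al ord0 <= k0)%N; rewrite /= ?andbF //.
set A := (\sum_(r < l) _)%N; set B := (\sum_(r < l) _)%N.
apply/andP/and4P => [[/eqP <- /eqP <-]|[le_j0a le_k0b /eqP A_eq /eqP B_eq]].
  by rewrite !leq_addr !addKn !eqxx.
by rewrite A_eq subnKC // B_eq subnKC // !eqxx.
Qed.

Lemma rhs_term_cons (j0 : 'I_N.+1) jt (k0 : 'I_M.+1) kt :
  rhs_term al be (ffun_cons j0 jt) (ffun_cons k0 kt) =
  ('C(j0 - 1, be ord0 - 1) * 'C(k0 - 1, al ord0 - 1))%N%:R * rhs_term al' be' jt kt.
Proof.
by rewrite /rhs_term big_ord_recl !ffun_cons0; under eq_bigr do rewrite !ffun_consS.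
Qed.

Lemma rhs_bounded_cons a b :
  rhs_bounded al be N M a b = step_sum (al ord0) (be ord0) (rhs_bounded al' be' N M) N M a b.
Proof.
rewrite /rhs_bounded big_ffun_cons; apply: eq_bigr => j0 _.
under eq_bigr => jt _ do rewrite big_mkcond big_ffun_cons.
rewrite exchange_big; apply: eq_bigr => k0 _.
under eq_bigr do under eq_bigr do rewrite rhs_cond_cons rhs_term_cons !andbA.
case: ifP => [|head_false]; last first.
  rewrite big1 // => jt _; rewrite big1 // => kt _.
  by move: head_false; rewrite !andbA => ->.
rewrite !andbA => -> /=; rewrite mulr_sumr; apply: eq_bigr => jt _.
by rewrite mulr_sumr [RHS]big_mkcond; apply: eq_bigr => kt _; case: ifP; rewrite ?mulr0.
Qed.
End RhsCons.

Lemma nested_rhs_bounded l (al be : 'I_l -> nat) N M a b :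
  (forall r, 0 < al r)%N -> (forall r, 0 < be r)%N -> (a <= N)%N -> (b <= M)%N ->
  nested al be a b = rhs_bounded al be N M a b.
Proof.
elim: l al be a b => [|l IH] al be a b al_gt0 be_gt0 le_aN le_bM.
  by rewrite rhs_bounded0 /nested enum_ord0.
rewrite (nested_step (al_gt0 ord0) (be_gt0 ord0) le_aN le_bM) rhs_bounded_cons.
apply: eq_step_sum => a' b' le_a' le_b'.
apply: IH => [r|r||]; [exact: al_gt0 | exact: be_gt0 |
  exact: leq_trans le_a' le_aN | exact: leq_trans le_b' le_bM].
Qed.

Theorem theorem3p3 (l : nat) (al be : 'I_l -> nat) :
  (forall r, (0 < al r)%N) -> (forall r, (0 < be r)%N) ->
  forall a b : nat, nested al be a b = rhs al be a b.
Proof.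
move=> al_gt0 be_gt0 a b.
by rewrite rhs_boundedE (nested_rhs_bounded al_gt0 be_gt0 (leqnn a) (leqnn b)).
Qed.
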